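(* Let $\mathcal X,\mathcal U$ be finite nonempty sets, $f:\mathcal X\times\mathcal U\to\mathcal X$ and $\ell,g:\mathcal X\to\mathbb R$. Let $V_{\mathrm A}^*(x)=\max_{\pi\in\Pi}\min_{\tau\in\mathbb N}g(\xi_x^\pi(\tau))$ and $\tilde\ell(x)=\min\{\ell(x),V_{\mathrm A}^*(x)\}$. Then for all $x\in\mathcal X$, $$\max_{\pi\in\Pi}\max_{\tau\in\mathbb N}\min\Big\{\tilde\ell(\xi_x^\pi(\tau)),\min_{\kappa\le\tau}g(\xi_x^\pi(\kappa))\Big\}=\max_{\mathbf u\in\mathbb U}\max_{\tau\in\mathbb N}\min\Big\{\tilde\ell(\xi_x^{\mathbf u}(\tau)),\min_{\kappa\le\tau}g(\xi_x^{\mathbf u}(\kappa))\Big\}.$$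
   Context: $\mathbb N=\{0,1,\dots\}$; $\Pi$ is the set of maps $\mathcal X\to\mathcal U$; $\mathbb U$ is the set of sequences $\mathbb N\to\mathcal U$. For $\pi\in\Pi$: $\xi_x^\pi(0)=x$, $\xi_x^\pi(t+1)=f(\xi_x^\pi(t),\pi(\xi_x^\pi(t)))$. For $\mathbf u\in\mathbb U$: $\xi_x^{\mathbf u}(0)=x$, $\xi_x^{\mathbf u}(t+1)=f(\xi_x^{\mathbf u}(t),\mathbf u(t))$. *)

From HB Require Import structures.
From mathcomp Require Import all_boot all_order all_algebra.
From mathcomp Require Import all_classical all_reals.
Set Implicit Arguments. Unset Strict Implicit. Unset Printing Implicit Defensive.
Import Order.TTheory GRing.Theory Num.Theory.
Local Open Scope ring_scope.
Local Open Scope classical_set_scope.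

Fixpoint traj_pol (X U : Type) (f : X -> U -> X) (pi : X -> U) (x : X) (t : nat) : X :=
  match t with
  | 0 => x
  | t'.+1 => let y := traj_pol f pi x t' in f y (pi y)
  end.

Fixpoint traj_seq (X U : Type) (f : X -> U -> X) (u : nat -> U) (x : X) (t : nat) : X :=
  match t with
  | 0 => x
  | t'.+1 => f (traj_seq f u x t') (u t')
  end.

Definition min_upto (X : Type) (R : realType) (g : X -> R) (xi : nat -> X) (tau : nat) : R :=
  \big[Num.min/g (xi 0%N)]_(k < tau.+1) g (xi k).

(* V_A^*(x) = max_pi min_tau g(xi_x^pi(tau)) (sup/inf; attained since all sets are finite). *)
Definition VA (X U : Type) (R : realType) (f : X -> U -> X) (g : X -> R) (x : X) : R :=
  sup [set inf [set g (traj_pol f pi x t) | t in [set: nat]] | pi in [set: X -> U]].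

Definition ltilde (X U : Type) (R : realType) (f : X -> U -> X) (l g : X -> R) (x : X) : R :=
  Num.min (l x) (VA f g x).

Definition reach_avoid_val (X U : Type) (R : realType) (f : X -> U -> X) (l g : X -> R)
  (xi : nat -> X) : R :=
  sup [set Num.min (ltilde f l g (xi t)) (min_upto g xi t) | t in [set: nat]].

From HB Require Import structures.
From mathcomp Require Import all_boot all_order all_algebra.
From mathcomp Require Import all_classical all_reals.
Import Order.TTheory GRing.Theory Num.Theory.
Local Open Scope ring_scope.
Local Open Scope classical_set_scope.
Set Implicit Arguments. Unset Strict Implicit.

(* Closed-loop trajectories are open-loop ones, so feedback can only lose.
   Conversely, fix a control sequence u and a time t, and let the feedback
   policy play, in state z, the control u used at the LAST time j < t at which
   the open-loop trajectory visited z.  From z = xi^u(m) it moves to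
   xi^u(j+1) with j >= m, so it runs along xi^u with loops cut out: it reaches
   xi^u(t) within t steps and only visits states among xi^u(0), ..., xi^u(t).
   Its reach-avoid value at that hitting time therefore dominates the term of
   u at time t. *)

Lemma traj_pol_traj_seq (X U : Type) (f : X -> U -> X) (pi : X -> U) (x : X) :
  traj_pol f pi x = traj_seq f (fun t => pi (traj_pol f pi x t)) x.
Proof. by apply: funext; elim=> //= t ->. Qed.

Section Shortcut.
Variables (X : eqType) (U : Type) (f : X -> U -> X).

(* Junk value 0 when [z] is not visited before time [t]. *)
Definition last_visit (s : nat -> X) (t : nat) (z : X) : nat :=
  (\max_(j < t | s j == z) j)%N.

Lemma last_visitP (s : nat -> X) t m : (m < t)%N ->
  [/\ m <= last_visit s t (s m), last_visit s t (s m) < t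
    & s (last_visit s t (s m)) = s m]%N.
Proof.
move=> mt; rewrite /last_visit (bigop.bigmax_eq_arg (Ordinal mt)) //=.
case: arg_maxnP => //= j /eqP sj jmax.
by split=> //; exact: (jmax (Ordinal mt)).
Qed.

Definition shortcut_policy (u : nat -> U) (t : nat) (x : X) : X -> U :=
  fun z => u (last_visit (traj_seq f u x) t z).

Variables (u : nat -> U) (t : nat) (x : X).
Local Notation s := (traj_seq f u x).
Local Notation p := (traj_pol f (shortcut_policy u t x) x).

Lemma shortcut_tracks k : (forall i, (i < k)%N -> p i != s t) ->
  exists2 m, (k <= m <= t)%N & p k = s m.
Proof.
elim: k => [|k IHk] before_hit; first by exists 0%N.
have [m /andP[km mt] pk] := IHk (fun i ik => before_hit i (ltnW ik)).
have {}mt : (m < t)%N.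
  rewrite ltn_neqAle mt andbT; apply: contra (before_hit k (ltnSn k)).
  by rewrite pk => /eqP ->.
have [mj jt sj] := last_visitP s mt.
exists (last_visit s t (s m)).+1; first by rewrite jt ltnS (leq_trans km mj).
by rewrite /= pk /shortcut_policy -{1}sj.
Qed.

Lemma shortcut_reaches : exists k, p k = s t /\
  forall i, (i <= k)%N -> exists2 j, (j <= t)%N & p i = s j.
Proof.
have hits : exists k, p k == s t.
  case: (boolP [exists i : 'I_t.+1, p i == s t]) => [/existsP[i hit]|/existsPn miss].
    by exists i.
  have [m /andP[tm mt] _] := @shortcut_tracks t.+1 (fun i it => miss (Ordinal it)).
  by move: (leq_trans tm mt); rewrite ltnn.
have [k /eqP pk kmin] := ex_minnP hits.
exists k; split=> // i; rewrite leq_eqVlt => /predU1P[->|ik]; first by exists t.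
have before_hit j : (j < i)%N -> p j != s t.
  by move=> ji; apply/negP => /kmin; rewrite leqNgt (ltn_trans ji ik).
by have [m /andP[_ mt] ->] := shortcut_tracks before_hit; exists m.
Qed.
End Shortcut.

Section Values.
Variables (R : realType) (X U : Type) (f : X -> U -> X) (l g : X -> R).
Local Notation stage xi t := (Num.min (ltilde f l g (xi t)) (min_upto g xi t)).

Lemma min_upto_le (xi : nat -> X) t k : (k <= t)%N -> min_upto g xi t <= g (xi k).
Proof.
by move=> kt; exact: (bigmin_le _ (Ordinal (kt : (k < t.+1)%N)) (fun i : 'I_t.+1 => g (xi i))).
Qed.

Lemma min_upto_le_visited (xi xi' : nat -> X) t k :
    (forall i, (i <= k)%N -> exists2 j, (j <= t)%N & xi' i = xi j) ->
  min_upto g xi t <= min_upto g xi' k.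
Proof.
move=> visited; have visited_le i : (i <= k)%N -> min_upto g xi t <= g (xi' i).
  by move=> /visited[j jt ->]; exact: min_upto_le.
rewrite [M in _ <= M]/min_upto; apply: le_bigmin; first exact: visited_le.
by move=> i _; exact: visited_le (ltn_ord i).
Qed.

Lemma stage_le_visited (xi xi' : nat -> X) t k : xi' k = xi t ->
    (forall i, (i <= k)%N -> exists2 j, (j <= t)%N & xi' i = xi j) ->
  stage xi t <= stage xi' k.
Proof.
move=> hit visited; rewrite hit le_min ge_min lexx /=.
by rewrite ge_min (min_upto_le_visited visited) orbT.
Qed.

Lemma stages_ub (xi : nat -> X) :
  ubound [set stage xi t | t in [set: nat]] (g (xi 0%N)).
Proof. by move=> _ [t _ <-]; rewrite ge_min (min_upto_le _ (leq0n t)) orbT. Qed.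

Lemma reach_avoid_val_le_g (xi : nat -> X) : reach_avoid_val f l g xi <= g (xi 0%N).
Proof. by apply: ge_sup; [exists (stage xi 0%N), 0%N | exact: stages_ub]. Qed.

Lemma stage_le_reach_avoid_val (xi : nat -> X) t : stage xi t <= reach_avoid_val f l g xi.
Proof. by apply: ub_le_sup; [exists (g (xi 0%N)); exact: stages_ub | exists t]. Qed.
End Values.

Theorem mainTheorem6 (R : realType) (X U : finType) (x0 : X) (u0 : U)
  (f : X -> U -> X) (l g : X -> R) (x : X) :
  sup [set reach_avoid_val f l g (traj_pol f pi x) | pi in [set: X -> U]] =
  sup [set reach_avoid_val f l g (traj_seq f u x) | u in [set: nat -> U]].
Proof.
set P := [set _ | pi in _]; set S := [set _ | u in _].
have ubP : ubound P (g x) by move=> _ [pi _ <-]; exact: reach_avoid_val_le_g.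
have ubS : ubound S (g x) by move=> _ [u _ <-]; exact: reach_avoid_val_le_g.
apply/le_anti/andP; split.
- apply: ge_sup => [|_ [pi _ <-]].
    by exists (reach_avoid_val f l g (traj_pol f (fun=> u0) x)), (fun=> u0).
  apply: ub_le_sup; first by exists (g x).
  by exists (fun t => pi (traj_pol f pi x t)); rewrite // -traj_pol_traj_seq.
- apply: ge_sup => [|_ [u _ <-]].
    by exists (reach_avoid_val f l g (traj_seq f (fun=> u0) x)), (fun=> u0).
  apply: ge_sup => [|_ [t _ <-]].
    by exists (Num.min (ltilde f l g x) (min_upto g (traj_seq f u x) 0)), 0%N.
  have [k [hit visited]] := shortcut_reaches f u t x.
  apply: le_trans (stage_le_visited f l g hit visited) _.
  apply: le_trans (stage_le_reach_avoid_val f l g _ k) _.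
  by apply: ub_le_sup; [exists (g x) | exists (shortcut_policy f u t x)].
Qed.
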